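(* Let $\mathcal H$ be a finite-dimensional Hilbert space, $|\theta\rangle\in\mathcal H$ a pure state, and $n,m,r$ nonnegative integers with $r+m\le n$. If $\varrho_n\in\mathrm{conv}(|\theta\rangle^{[\otimes,n,r]})$, then $\varrho_{n-m}=\mathrm{Tr}_m(\varrho_n)$, the reduced density matrix obtained by tracing out any $m$ of the $n$ systems, belongs to $\mathrm{conv}(|\theta\rangle^{[\otimes,n-m,r]})$.
   Context: For $0\le r\le N$, let $\mathrm{Sym}(\mathcal H^{\otimes N})$ be the symmetric subspace of $\mathcal H^{\otimes N}$, and let $\mathcal V(\mathcal H^{\otimes N},|\theta\rangle^{\otimes N-r})=\{\pi(|\theta\rangle^{\otimes N-r}\otimes|\psi_r\rangle):\pi\in S_N,\ |\psi_r\rangle\in\mathcal H^{\otimes r}\}$, where $S_N$ acts by permuting the $N$ tensor factors. The almost power states along $|\theta\rangle$ are the pure states in $|\theta\rangle^{[\otimes,N,r]}:=\mathrm{Sym}(\mathcal H^{\otimes N})\cap\mathrm{span}(\mathcal V(\mathcal H^{\otimes N},|\theta\rangle^{\otimes N-r}))$, and $\mathrm{conv}(|\theta\rangle^{[\otimes,N,r]})$ denotes the set of mixtures (convex combinations of the projectors) of such states. *)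

(* H = C^d over an algebraically closed numeric field C
   (e.g. the complex numbers). H^{(x)N} is modelled as functions on
   index tuples {ffun 'I_N -> 'I_d}. *)
From HB Require Import structures.
From mathcomp Require Import all_boot all_order all_algebra all_fingroup.
Unset Printing Implicit Defensive.
Import Order.TTheory GRing.Theory Num.Theory.
Local Open Scope ring_scope.

Notation idx d N := {ffun 'I_N -> 'I_d}.
Notation vecT C d N := {ffun idx d N -> C}.
Notation op C d N := {ffun idx d N * idx d N -> C}.

Section QDefs.
Variable C : numClosedFieldType.
Variable d : nat.
Local Notation idx N := (idx d N).
Local Notation vec N := (vecT C d N).
Local Notation op N := (op C d N).

Definition is_pure {N} (v : vec N) : Prop := \sum_i `|v i| ^+ 2 = 1.

Definition permV {N} (s : 'S_N) (v : vec N) : vec N :=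
  [ffun i : idx N => v [ffun k => i (s k)]].

(* |theta>^{(x) K} (x) |psi_r>  as a vector of H^{(x)(K+r)} *)
Definition tensV {K r} (theta : {ffun 'I_d -> C}) (psi : vec r) : vec (K + r) :=
  [ffun i : idx (K + r) =>
     (\prod_(k < K) theta (i (lshift r k))) *
     psi [ffun j : 'I_r => i (rshift K j)]].

Definition castV {M N} (e : M = N) (w : vec M) : vec N :=
  [ffun i : idx N => w [ffun k => i (cast_ord e k)]].

(* V(H^{(x)N}, |theta>^{(x)N-r}) : pi(|theta>^{(x)N-r} (x) |psi_r>), pi in S_N
   (nonempty only when r <= N, with K = N - r) *)
Definition Vset N r (theta : {ffun 'I_d -> C}) (v : vec N) : Prop :=
  exists (K : nat) (e : (K + r)%N = N) (s : 'S_N) (psi : vec r),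
    v = permV s (castV e (tensV theta psi)).

Definition in_span {N} (P : vec N -> Prop) (v : vec N) : Prop :=
  exists (k : nat) (c : 'I_k -> C) (w : 'I_k -> vec N),
    (forall j, P (w j)) /\ v = [ffun i => \sum_(j < k) c j * w j i].

Definition symmetric {N} (v : vec N) : Prop := forall s : 'S_N, permV s v = v.

Definition almost_power_space N r theta (v : vec N) : Prop :=
  symmetric v /\ in_span (Vset N r theta) v.

Definition almost_power_state N r theta (v : vec N) : Prop :=
  is_pure v /\ almost_power_space N r theta v.

Definition proj {N} (v : vec N) : op N :=
  [ffun ij : idx N * idx N => v ij.1 * (v ij.2)^*].

Definition in_conv_apw N r theta (rho : op N) : Prop :=
  exists (k : nat) (p : 'I_k -> C) (v : 'I_k -> vec N),
    (forall j, 0 <= p j) /\ \sum_(j < k) p j = 1 /\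
    (forall j, almost_power_state N r theta (v j)) /\
    rho = [ffun ij => \sum_(j < k) p j * proj (v j) ij].

(* partial trace: f : 'I_M -> 'I_N (injective) lists the kept systems;
   all systems outside the image of f are traced out. *)
Definition ptrace {N M} (f : 'I_M -> 'I_N) (rho : op N) : op M :=
  [ffun ij : idx M * idx M =>
     \sum_(x : idx N | [forall k, x (f k) == ij.1 k])
      \sum_(y : idx N | [forall k, y (f k) == ij.2 k] &&
                        [forall p, (p \notin codom f) ==> (x p == y p)])
        rho (x, y)].

End QDefs.

(* Write the state as sum_l p_l |v_l><v_l| with almost power states v_l.
   Tracing out the systems outside the image of f gives
   sum_l sum_z p_l |v_l^z><v_l^z|, where z runs over the configurations of
   the traced-out systems and v_l^z is v_l with those systems frozen to z.
   Freezing coordinates preserves symmetry under permutations of the kept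
   systems, and it maps a generator pi(|theta>^(x)K (x) |psi>) to a vector
   of the same form in which at most r factors differ from theta; absorbing
   surplus theta factors into psi leaves exactly r. Normalising the nonzero
   v_l^z exhibits the reduced state as a mixture of almost power states. *)

From HB Require Import structures.
From mathcomp Require Import all_boot all_order all_algebra all_fingroup.
From mathcomp Require Import zify.
Import Order.TTheory GRing.Theory Num.Theory.
Set Implicit Arguments.
Unset Strict Implicit.

Local Open Scope ring_scope.

Lemma exists_subset_card (T : finType) (A : {set T}) k :
  (k <= #|A|)%N -> exists2 B : {set T}, B \subset A & #|B| = k.
Proof.
move=> le_kA; exists [set x in take k (enum A)].
  by apply/subsetP => x; rewrite inE => /mem_take; rewrite mem_enum.
rewrite cardsE; move/card_uniqP: (take_uniq k (enum_uniq (mem A))) => ->.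
by rewrite size_takel // -cardE.
Qed.

Lemma big_pair_snd (R : Type) (idx : R) (op : Monoid.com_law idx) (I J : finType)
    (Q : pred J) (F : I -> J -> R) :
  \big[op/idx]_(t : I * J | Q t.2) F t.1 t.2 =
  \big[op/idx]_i \big[op/idx]_(j | Q j) F i j.
Proof. by rewrite pair_big. Qed.

Section Factorization.
Variables (C : numClosedFieldType) (d : nat).
Local Notation idx N := (idx d N).
Local Notation vec N := (vecT C d N).

(* The vectors of Vset, with the permutation absorbed into the set A of
   systems carrying theta. *)
Definition power_factor_on {N} (theta : {ffun 'I_d -> C}) (A : {set 'I_N})
    (v : vec N) :=
  exists2 g : idx N -> C,
    (forall x y : idx N, {in ~: A, x =1 y} -> g x = g y) &
    forall x, v x = (\prod_(p in A) theta (x p)) * g x.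

Lemma Vset_power_factor_on N r theta (v : vec N) :
  Vset C d N r theta v -> exists2 A, #|~: A| = r & power_factor_on theta A v.
Proof.
case=> K [e [s [psi ->]]].
pose h k := s (cast_ord e k).
have h_inj : injective h by move=> a b /perm_inj /cast_ord_inj.
have hl_inj : injective (h \o lshift r) by move=> a b /h_inj /lshift_inj.
pose A := [set h (lshift r k) | k : 'I_K].
exists A.
  have := cardsC A; rewrite card_imset // !card_ord; lia.
exists (fun x => psi [ffun j => x (h (rshift K j))]) => [x y xy|x].
  congr (psi _); apply/ffunP => j; rewrite !ffunE; apply: xy.
  rewrite inE; apply/imsetP => -[k _ /h_inj /(congr1 val) /=].
  by have := ltn_ord k; lia.
rewrite /permV /castV /tensV !ffunE big_imset /=; last by move=> a b _ _ /hl_inj.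
congr (_ * _); last by congr (psi _); apply/ffunP => j; rewrite !ffunE.
by apply: eq_big => // k _; rewrite !ffunE.
Qed.

Lemma power_factor_onS N theta (A B : {set 'I_N}) (v : vec N) :
  B \subset A -> power_factor_on theta A v -> power_factor_on theta B v.
Proof.
move=> sBA [g g_off v_eq].
exists (fun x : idx N => (\prod_(p in A :\: B) theta (x p)) * g x) => [x y xy|x].
  have sCA : ~: A \subset ~: B by rewrite setCS.
  congr (_ * _); last by apply: g_off => p /(subsetP sCA); apply: xy.
  by apply: eq_bigr => p /setDP [_ pB]; rewrite xy // inE.
by rewrite v_eq (big_setID B) /= (setIidPr sBA) mulrA.
Qed.

Lemma power_factor_on_Vset N r theta (A : {set 'I_N}) (v : vec N) (a0 : 'I_d) :
  #|~: A| = r -> power_factor_on theta A v -> Vset C d N r theta v.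
Proof.
move=> cardA [g g_off v_eq].
have eK : (#|A| + r)%N = N by rewrite -cardA cardsC card_ord.
pose S := enum A ++ enum (~: A).
have size_S : size S = N by rewrite size_cat -!cardE cardA.
have uniq_S : uniq S.
  rewrite cat_uniq !enum_uniq /= andbT; apply/hasPn => p.
  by rewrite !mem_enum inE.
pose h p := nth p S p.
have h_inj : injective h.
  move=> p q; rewrite /h (set_nth_default p) ?size_S //.
  by move/eqP; rewrite nth_uniq ?size_S // => /eqP /val_inj.
exists #|A|, eK, (perm h_inj).
exists [ffun y : idx r => g [ffun p =>
  if [pick j : 'I_r | nth p (enum (~: A)) j == p] is Some j then y j else a0]].
apply/ffunP => x; rewrite /permV /castV /tensV !ffunE v_eq.
congr (_ * _).
  rewrite big_enum_val; apply: eq_bigr => k _; rewrite !ffunE permE /h /=.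
  rewrite nth_cat -cardE ltn_ord /enum_val; congr (theta (x _)).
  by apply: set_nth_default; rewrite -cardE.
apply: g_off => p pA; rewrite !ffunE.
case: pickP => [j /eqP hj|none].
  rewrite !ffunE permE /h /= nth_cat -cardE ltnNge leq_addr /= addKn.
  by rewrite (set_nth_default p) ?hj // -cardE cardA.
have p_in : p \in enum (~: A) by rewrite mem_enum.
have lt_idx : (index p (enum (~: A)) < r)%N by rewrite -cardA cardE index_mem.
by have := none (Ordinal lt_idx); rewrite /= nth_index ?eqxx.
Qed.

End Factorization.

Section Mixtures.
Variables (C : numClosedFieldType) (d N : nat).
Local Notation vec := (vecT C d N).
Local Notation proj := (proj C d).

Definition sqnorm (v : vec) : C := \sum_i `|v i| ^+ 2.

Lemma sqnorm_ge0 v : 0 <= sqnorm v.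
Proof. by apply: sumr_ge0 => i _; rewrite exprn_ge0. Qed.

Lemma sqnorm_eq0 v : sqnorm v = 0 -> v = 0.
Proof.
move=> v0; apply/ffunP => i; rewrite ffunE; apply/eqP.
rewrite -normr_eq0 -sqrf_eq0; apply/eqP.
by apply: (psumr_eq0P _ v0) => // j _; rewrite exprn_ge0.
Qed.

Lemma sqnormZ (c : C) (v : vec) :
  sqnorm [ffun i => c * v i] = `|c| ^+ 2 * sqnorm v.
Proof.
by rewrite /sqnorm mulr_sumr; apply: eq_bigr => i _; rewrite ffunE normrM exprMn.
Qed.

Lemma projZ (c : C) (v : vec) ij :
  proj [ffun i => c * v i] ij = `|c| ^+ 2 * proj v ij.
Proof. by rewrite !ffunE rmorphM /= normCK mulrACA. Qed.

Lemma proj0 ij : proj (0 : vec) ij = 0.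
Proof. by rewrite !ffunE mul0r. Qed.

Lemma norm_sqrtC_sq (x : C) : 0 <= x -> `|sqrtC x| ^+ 2 = x.
Proof. by move=> x_ge0; rewrite ger0_norm ?sqrtC_ge0 // sqrtCK. Qed.

Definition normalize (v : vec) : vec := [ffun i => (sqrtC (sqnorm v))^-1 * v i].

Lemma sqnorm_normalize v : sqnorm v != 0 -> sqnorm (normalize v) = 1.
Proof.
by move=> v_neq0; rewrite sqnormZ normfV exprVn norm_sqrtC_sq ?sqnorm_ge0 ?mulVf.
Qed.

Lemma proj_normalize v ij : sqnorm v * proj (normalize v) ij = proj v ij.
Proof.
have [v0|v_neq0] := eqVneq (sqnorm v) 0.
  by rewrite v0 mul0r (sqnorm_eq0 v0) proj0.
by rewrite projZ mulrA normfV exprVn norm_sqrtC_sq ?sqnorm_ge0 // mulfV ?mul1r.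
Qed.

Lemma almost_power_spaceZ r theta (c : C) (v : vec) :
  almost_power_space C d N r theta v ->
  almost_power_space C d N r theta [ffun i => c * v i].
Proof.
move=> [v_sym [k [a [w [w_V v_eq]]]]]; split.
  by move=> s; apply/ffunP => i; rewrite !ffunE -[in RHS](v_sym s) !ffunE.
exists k, (fun j => c * a j), w; split=> //; apply/ffunP => i.
by rewrite v_eq !ffunE mulr_sumr; apply: eq_bigr => j _; rewrite mulrA.
Qed.

Lemma in_conv_apw_sum_proj r theta (T : finType) (P : pred T) (w : T -> vec) :
  (forall t, P t -> almost_power_space C d N r theta (w t)) ->
  \sum_(t | P t) sqnorm (w t) = 1 ->
  in_conv_apw C d N r theta [ffun ij => \sum_(t | P t) proj (w t) ij].
Proof.
move=> w_aps w_sum1; pose S := [set t | P t && (sqnorm (w t) != 0)].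
have sum_S (F : T -> C) : (forall t, sqnorm (w t) = 0 -> F t = 0) ->
    \sum_(t | P t) F t = \sum_(t in S) F t.
  move=> F0; rewrite (bigID (fun t => sqnorm (w t) != 0)) /= [X in _ + X]big1.
    by rewrite addr0; apply: eq_bigl => t; rewrite inE.
  by move=> t /andP [_ /negPn /eqP /F0].
exists #|S|, (fun a => sqnorm (w (enum_val a))), (fun a => normalize (w (enum_val a))).
split; [by move=> a; apply: sqnorm_ge0|split; [|split]].
- by rewrite -(big_enum_val (fun t => sqnorm (w t))) -sum_S // => t ->.
- move=> a; have /[!inE] /andP [Pa w_neq0] := enum_valP a.
  by split; [exact: sqnorm_normalize|exact/almost_power_spaceZ/w_aps].
- apply/ffunP => ij; rewrite !ffunE sum_S => [|t /sqnorm_eq0 ->]; last exact: proj0.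
  by rewrite big_enum_val; apply: eq_bigr => a _; rewrite proj_normalize.
Qed.

End Mixtures.

Section Glue.
Variables (C : numClosedFieldType) (d M N : nat) (f : 'I_M -> 'I_N).
Hypothesis f_inj : injective f.
Variable a0 : 'I_d.
Local Notation idx N := (idx d N).
Local Notation vec N := (vecT C d N).

Definition glue (z : idx N) (i : idx M) : idx N :=
  [ffun p => if [pick q | f q == p] is Some q then i q else z p].

Lemma glue_f (z : idx N) (i : idx M) q : glue z i (f q) = i q.
Proof.
by rewrite ffunE; case: pickP => [q' /eqP /f_inj -> //|/(_ q)]; rewrite eqxx.
Qed.

Lemma glue_notin (z : idx N) (i : idx M) p : p \notin codom f -> glue z i p = z p.
Proof.
move=> p_out; rewrite ffunE; case: pickP => [q /eqP fq|//].
by rewrite -fq codom_f in p_out.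
Qed.

Lemma glue_eq (z : idx N) (i : idx M) (x : idx N) :
  (forall q, x (f q) = i q) -> (forall p, p \notin codom f -> x p = z p) ->
  glue z i = x.
Proof.
move=> x_f x_out; apply/ffunP => p.
have [/codomP [q ->]|p_out] := boolP (p \in codom f).
  by rewrite glue_f x_f.
by rewrite glue_notin // x_out.
Qed.

Lemma glue_glue (z : idx N) (i j : idx M) : glue (glue z i) j = glue z j.
Proof. by apply: glue_eq => [q|p p_out]; rewrite ?glue_f ?glue_notin. Qed.

Lemma glue_id (x : idx N) (i : idx M) : [forall q, x (f q) == i q] -> glue x i = x.
Proof. by move=> /forallP x_f; apply: glue_eq => // q; apply/eqP. Qed.

Definition extend_fun (s : 'S_M) (p : 'I_N) : 'I_N :=
  if [pick q | f q == p] is Some q then f (s q) else p.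

Lemma extend_fun_inj s : injective (extend_fun s).
Proof.
move=> p1 p2; rewrite /extend_fun.
case: pickP => [q1 /eqP <-|out1]; case: pickP => [q2 /eqP <-|out2].
- by move/f_inj/perm_inj ->.
- by move=> e; have := out2 (s q1); rewrite e eqxx.
- by move=> e; have := out1 (s q2); rewrite -e eqxx.
- by [].
Qed.

Definition extend_perm (s : 'S_M) : 'S_N := perm (@extend_fun_inj s).

Lemma extend_perm_f s q : extend_perm s (f q) = f (s q).
Proof.
by rewrite permE /extend_fun; case: pickP => [q' /eqP /f_inj ->|/(_ q)]; rewrite ?eqxx.
Qed.

Lemma extend_perm_notin s p : p \notin codom f -> extend_perm s p = p.
Proof.
move=> p_out; rewrite permE /extend_fun; case: pickP => [q /eqP fq|//].
by rewrite -fq codom_f in p_out.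
Qed.

Lemma glue_permV (z : idx N) (i : idx M) (s : 'S_M) :
  glue z [ffun q => i (s q)] = [ffun p => glue z i (extend_perm s p)].
Proof.
apply: glue_eq => [q|p p_out]; rewrite ffunE.
  by rewrite extend_perm_f glue_f ffunE.
by rewrite extend_perm_notin // glue_notin.
Qed.

Definition slice (z : idx N) (v : vec N) : vec M := [ffun i => v (glue z i)].

Lemma permV_slice (z : idx N) (s : 'S_M) (v : vec N) :
  permV C d s (slice z v) = slice z (permV C d (extend_perm s) v).
Proof. by apply/ffunP => i; rewrite !ffunE glue_permV. Qed.

Lemma power_factor_on_slice theta (A : {set 'I_N}) (z : idx N) (v : vec N) :
  power_factor_on theta A v -> power_factor_on theta (f @^-1: A) (slice z v).
Proof.
move=> [g g_off v_eq].
exists (fun i : idx M =>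
  (\prod_(p in A | p \notin codom f) theta (z p)) * g (glue z i)) => [i j ij|i].
  congr (_ * _); apply: g_off => p.
  have [/codomP [q ->]|p_nf] := boolP (p \in codom f); last by rewrite !glue_notin.
  by rewrite !glue_f => fq_out; apply: ij; rewrite !inE in fq_out *.
rewrite ffunE v_eq (bigID (mem (codom f))) /= -mulrA; congr (_ * (_ * _)).
  under [RHS]eq_bigr => q _ do rewrite -(glue_f z i q).
  rewrite -(@big_imset _ _ _ _ _ f _ (fun p => theta (glue z i p))) /=;
    last by move=> a b _ _ /f_inj.
  apply: eq_bigl => p.
  apply/andP/imsetP => [[pA /codomP [q fq]]|[q]]; last first.
    by rewrite inE => fqA ->; rewrite codom_f.
  by exists q; rewrite // inE -fq.
by apply: eq_bigr => p /andP [_ p_out]; rewrite glue_notin.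
Qed.

Lemma card_preimsetC (A : {set 'I_N}) : (#|~: (f @^-1: A)| <= #|~: A|)%N.
Proof.
rewrite -preimsetC -(card_imset _ f_inj); apply: subset_leq_card.
by apply/subsetP => p /imsetP [q]; rewrite inE => fqA ->.
Qed.

Lemma Vset_slice r theta (z : idx N) (v : vec N) : (r <= M)%N ->
  Vset C d N r theta v -> Vset C d M r theta (slice z v).
Proof.
move=> le_rM /Vset_power_factor_on [A cardA /(power_factor_on_slice z)].
have le_A : (M - r <= #|f @^-1: A|)%N.
  have := card_preimsetC A; have := cardsC (f @^-1: A); rewrite cardA card_ord; lia.
have [B sB cardB] := exists_subset_card le_A.
move=> /(power_factor_onS sB); apply: power_factor_on_Vset a0 _.
by apply/eqP; rewrite -(eqn_add2l #|B|) cardsC card_ord cardB subnK.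
Qed.

Lemma almost_power_space_slice r theta (z : idx N) (v : vec N) : (r <= M)%N ->
  almost_power_space C d N r theta v -> almost_power_space C d M r theta (slice z v).
Proof.
move=> le_rM [v_sym [k [a [w [w_V v_eq]]]]]; split.
  by move=> s; rewrite permV_slice v_sym.
exists k, a, (fun j => slice z (w j)); split; first by move=> j; apply: Vset_slice.
by apply/ffunP => i; rewrite v_eq !ffunE; apply: eq_bigr => j _; rewrite ffunE.
Qed.

(* [env z == z] selects one representative z for each configuration of the
   traced-out systems. *)
Definition env (z : idx N) : idx N := glue z [ffun => a0].

Lemma ptraceE (rho : op C d N) (i j : idx M) :
  ptrace C d f rho (i, j) =
  \sum_(x : idx N | [forall q, x (f q) == i q]) rho (x, glue x j).
Proof.
rewrite ffunE /=; apply: eq_bigr => x _; apply: big_pred1 => y /=.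
apply/andP/eqP => [[/forallP y_f /forallP y_out]|->].
  apply: esym; apply: glue_eq => [q|p p_out]; first exact/eqP.
  by apply/esym/eqP; apply: (implyP (y_out p)).
split; apply/forallP; first by move=> q; rewrite glue_f.
by move=> p; apply/implyP => p_out; rewrite glue_notin.
Qed.

Lemma big_fiber_glue (F : idx N -> C) (i : idx M) :
  \sum_(x : idx N | [forall q, x (f q) == i q]) F x =
  \sum_(z | env z == z) F (glue z i).
Proof.
rewrite (reindex_onto (glue^~ i) env) => [|x x_i]; last by rewrite glue_glue glue_id.
apply: eq_bigl => z; rewrite /env glue_glue.
by have -> : [forall q, glue z i (f q) == i q] by apply/forallP => q; rewrite glue_f.
Qed.

Lemma big_glue (F : idx N -> C) :
  \sum_x F x = \sum_(z | env z == z) \sum_i F (glue z i).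
Proof.
rewrite (partition_big (fun x : idx N => [ffun q => x (f q)]) predT) //=.
rewrite exchange_big; apply: eq_bigr => i _; rewrite -big_fiber_glue.
apply: eq_bigl => x; apply/eqP/forallP => [<- q|x_i]; first by rewrite ffunE.
by apply/ffunP => q; rewrite ffunE; apply/eqP.
Qed.

Lemma ptrace_proj (v : vec N) (i j : idx M) :
  ptrace C d f (proj C d v) (i, j) =
  \sum_(z | env z == z) proj C d (slice z v) (i, j).
Proof.
rewrite ptraceE big_fiber_glue; apply: eq_bigr => z _.
by rewrite !ffunE /= glue_glue.
Qed.

Lemma ptrace_mix (T : finType) (c : T -> C) (rho : T -> op C d N) :
  ptrace C d f [ffun ij => \sum_t c t * rho t ij] =
  [ffun ij => \sum_t c t * ptrace C d f (rho t) ij].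
Proof.
apply/ffunP => -[i j]; rewrite !ffunE.
under [RHS]eq_bigr do rewrite ffunE mulr_sumr.
rewrite exchange_big; apply: eq_bigr => x _.
under [RHS]eq_bigr do rewrite mulr_sumr.
rewrite exchange_big; apply: eq_bigr => y _.
by rewrite ffunE.
Qed.

Lemma sqnorm_slice (v : vec N) : \sum_(z | env z == z) sqnorm (slice z v) = sqnorm v.
Proof.
by rewrite [RHS]big_glue; apply: eq_bigr => z _; apply: eq_bigr => i _; rewrite ffunE.
Qed.

Lemma ptrace_in_conv_apw r theta (rho : op C d N) : (r <= M)%N ->
  in_conv_apw C d N r theta rho -> in_conv_apw C d M r theta (ptrace C d f rho).
Proof.
move=> le_rM [k [p [v [p_ge0 [p_sum1 [v_st ->]]]]]].
pose w l z := [ffun i => sqrtC (p l) * slice z (v l) i].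
have -> : ptrace C d f [ffun ij => \sum_l p l * proj C d (v l) ij] =
          [ffun ij => \sum_(t | env t.2 == t.2) proj C d (w t.1 t.2) ij].
  rewrite ptrace_mix; apply/ffunP => -[i j]; rewrite !ffunE.
  rewrite (big_pair_snd _ (fun z => env z == z) (fun l z => proj C d (w l z) (i, j))).
  apply: eq_bigr => l _; rewrite ptrace_proj mulr_sumr; apply: eq_bigr => z _.
  by rewrite projZ norm_sqrtC_sq.
apply: in_conv_apw_sum_proj => [t _|].
  exact/almost_power_spaceZ/almost_power_space_slice/(v_st t.1).2.
rewrite (big_pair_snd _ (fun z => env z == z) (fun l z => sqnorm (w l z))) -p_sum1.
apply: eq_bigr => l _.
under eq_bigr do rewrite sqnormZ norm_sqrtC_sq //.
by rewrite -mulr_sumr sqnorm_slice ((v_st l).1 : sqnorm _ = 1) mulr1.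
Qed.

End Glue.

Theorem lemma1 (C : numClosedFieldType) (d : nat) (theta : {ffun 'I_d -> C})
  (n m r : nat) (hrmn : (r + m <= n)%N)
  (htheta : \sum_i `|theta i| ^+ 2 = 1)
  (rho : op C d n) (hrho : in_conv_apw C d n r theta rho)
  (f : 'I_(n - m) -> 'I_n) (hf : injective f) :
  in_conv_apw C d (n - m) r theta (ptrace C d f rho).
Proof.
(* The normalisation of theta only serves to make 'I_d inhabited. *)
have d_gt0 : (0 < d)%N.
  case: posnP htheta => // d0; rewrite big1 => [/esym/eqP|i]; first by rewrite oner_eq0.
  by have := ltn_ord i; rewrite {2}d0.
apply: (ptrace_in_conv_apw hf (Ordinal d_gt0)) hrho.
by rewrite leq_subRL ?(leq_trans (leq_addl r m)) // addnC.
Qed.
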